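(* Let $\phi:\mathbb{F}_2^n\to\mathbb{C}$ be a stabilizer state and $L=\mathcal{L}(\phi)$ its Lagrangian subspace. Then for every nonzero $f:\mathbb{F}_2^n\to\mathbb{C}$, $$\Big(\frac{|\langle f,\phi\rangle|}{\|f\|_2}\Big)^4\le P_f(L)\le\Big(\frac{\|f\|_{U^3}}{\|f\|_2}\Big)^4.$$
   Context: $\langle f,g\rangle=\mathbb{E}_xf(x)\overline{g(x)}$, $\|f\|_2=\langle f,f\rangle^{1/2}$, $\Delta_af(x)=f(x+a)\overline{f(x)}$, $\hat g(b)=\mathbb{E}_xg(x)(-1)^{b\cdot x}$, $\|f\|_{U^3}=(\mathbb{E}_{x,a,b,c}\Delta_a\Delta_b\Delta_cf(x))^{1/8}$. A stabilizer state is $\phi$ with $\|\phi\|_2=\|\phi\|_{U^3}=1$; for such $\phi$ there is a unique Lagrangian subspace $\mathcal{L}(\phi)\le\mathbb{F}_2^{2n}$ (maximal isotropic for $[(a,b),(c,d)]=a\cdot d+b\cdot c$) with $|\widehat{\Delta_a\phi}(b)|=\mathbf{1}_{\mathcal{L}(\phi)}(a,b)$. The characteristic distribution of nonzero $f$ is the probability distribution $P_f(a,b)=|\widehat{\Delta_af}(b)|^2/(2^n\|f\|_2^4)$ on $\mathbb{F}_2^{2n}$, and $P_f(L)=\sum_{(a,b)\in L}P_f(a,b)$. *)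

From mathcomp Require Import all_boot all_algebra.
From mathcomp Require Import reals complex.
Set Implicit Arguments. Unset Strict Implicit. Unset Printing Implicit Defensive.
Import GRing.Theory Num.Theory Num.Def.
Local Open Scope ring_scope.

Section Stabilizer.
Variable R : realType.
Local Notation C := R[i].
Variable n : nat.

Definition vec := 'rV['F_2]_n.

Definition dot (a x : vec) : 'F_2 := (a *m x^T) 0 0.

Definition sgnF2 (t : 'F_2) : C := if t == 0 then 1 else -1.

Definition avg (g : vec -> C) : C := (2%:R ^+ n)^-1 * \sum_(x : vec) g x.

Definition inner (f g : vec -> C) : C := avg (fun x => f x * (g x)^*).

Definition norm2 (f : vec -> C) : C := sqrtC (inner f f).

Definition Delta (a : vec) (f : vec -> C) : vec -> C :=
  fun x => f (x + a) * (f x)^*.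

Definition fourier (g : vec -> C) (b : vec) : C :=
  avg (fun x => g x * sgnF2 (dot b x)).

Definition U3norm (f : vec -> C) : C :=
  8.-root (avg (fun x => avg (fun a => avg (fun b => avg (fun c =>
     Delta a (Delta b (Delta c f)) x))))).

Definition stabilizer_state (phi : vec -> C) : Prop :=
  norm2 phi = 1 /\ U3norm phi = 1.

Definition symp (u v : vec * vec) : 'F_2 := dot u.1 v.2 + dot u.2 v.1.

(* subspaces of F_2^(2n) (over F_2 closure under + and 0 suffices) *)
Definition is_subspace (L : {set vec * vec}) : Prop :=
  (0, 0) \in L /\ (forall u v, u \in L -> v \in L -> (u.1 + v.1, u.2 + v.2) \in L).

Definition isotropic (L : {set vec * vec}) : Prop :=
  forall u v, u \in L -> v \in L -> symp u v = 0.

Definition lagrangian (L : {set vec * vec}) : Prop :=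
  [/\ is_subspace L, isotropic L &
      forall L' : {set vec * vec}, is_subspace L' -> isotropic L' ->
        L \subset L' -> L' = L].

Definition is_lagrangian_of (phi : vec -> C) (L : {set vec * vec}) : Prop :=
  lagrangian L /\
  forall a b : vec, `|fourier (Delta a phi) b| = ((a, b) \in L)%:R.

Definition charP (f : vec -> C) (ab : vec * vec) : C :=
  `|fourier (Delta ab.1 f) ab.2| ^+ 2 / (2%:R ^+ n * norm2 f ^+ 4).

Definition charP_set (f : vec -> C) (L : {set vec * vec}) : C :=
  \sum_(ab in L) charP f ab.

End Stabilizer.

From mathcomp Require Import all_boot all_order all_algebra ring.
From mathcomp Require Import reals complex.
Set Implicit Arguments. Unset Strict Implicit. Unset Printing Implicit Defensive.
Import Order.TTheory GRing.Theory Num.Theory Num.Def.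
Local Open Scope ring_scope.

(* Write N = 2^n. Parseval applied to every derivative Delta_a gives
   sum_(a,b) hat(Delta_a f)(b) conj(hat(Delta_a g)(b)) = N |<f,g>|^2.
   For g = phi the moduli |hat(Delta_a phi)(b)| form the indicator of L, so
   f = phi yields #|L| = N, and for general f the identity bounds
   N |<f,phi>|^2 by the sum over L of |hat(Delta_a f)(b)|; Cauchy-Schwarz over
   L turns this into the lower bound. For the upper bound, Cauchy-Schwarz over
   L bounds (sum_L |hat(Delta_a f)(b)|^2)^2 by N sum_L |hat(Delta_a f)(b)|^4,
   and the full sum of these fourth powers is N^2 ||f||_U3^8 by the U^2
   identity ||g||_U2^4 = sum_b |hat g(b)|^4 applied to each g = Delta_a f. *)

Lemma cauchy_schwarz_sum (R : numDomainType) (I : finType) (A : {pred I})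
    (y : I -> R) :
  {in A, forall i, y i \is Num.real} ->
  (\sum_(i in A) y i) ^+ 2 <= #|A|%:R * \sum_(i in A) y i ^+ 2.
Proof.
move=> y_real.
set S1 := \sum_(i in A) y i; set S2 := \sum_(i in A) y i ^+ 2.
have sum_sqr_diff :
    \sum_(i in A) \sum_(j in A) (y i - y j) ^+ 2 = (#|A|%:R * S2 - S1 ^+ 2) *+ 2.
  under eq_bigr => i _.
    under eq_bigr => j _ do rewrite sqrrB.
    rewrite big_split sumrB /= sumr_const sumrMnl -big_distrr /=.
  over.
  rewrite big_split sumrB /= sumr_const !sumrMnl -big_distrl /= -/S1 -/S2.
  rewrite -mulr_natl; ring.
have : 0 <= (#|A|%:R * S2 - S1 ^+ 2) *+ 2.
  rewrite -sum_sqr_diff; apply: sumr_ge0 => i Ai; apply: sumr_ge0 => j Aj.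
  by rewrite real_exprn_even_ge0 // realB ?y_real.
by rewrite pmulrn_lge0 // subr_ge0.
Qed.

Lemma sum_in_le_sum (R : numDomainType) (I : finType) (A : {pred I})
    (g : I -> R) :
  (forall i, 0 <= g i) -> \sum_(i in A) g i <= \sum_i g i.
Proof.
by move=> g_ge0; rewrite [leRHS](bigID (mem A)) /= lerDl sumr_ge0.
Qed.

Lemma F2_cases (t : 'F_2) : t = 0 \/ t = 1.
Proof.
have : (val t < 2)%N by exact: ltn_ord.
by case Et: (val t) => [|[|//]] _; [left | right]; apply: val_inj; rewrite Et.
Qed.

Lemma pchar_F2 : 2 \in [pchar 'F_2].
Proof. exact: pchar_Fp. Qed.

Section FourierF2.

Variable R : realType.
Local Notation C := R[i].
Variable n : nat.
Local Notation vec := (vec n).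
Local Notation N := ((2%:R : C) ^+ n).

Lemma sgnF2D (s t : 'F_2) : sgnF2 R (s + t) = sgnF2 R s * sgnF2 R t.
Proof.
by case: (F2_cases s) => ->; case: (F2_cases t) => ->;
  rewrite /sgnF2 //= ?mul1r ?mulrNN ?mulr1.
Qed.

Lemma rmorph_sgnF2 (f : {rmorphism C -> C}) (t : 'F_2) : f (sgnF2 R t) = sgnF2 R t.
Proof. by rewrite /sgnF2; case: ifP => _; rewrite ?rmorph1 ?rmorphN1. Qed.

Lemma sgnF2_sqr (t : 'F_2) : sgnF2 R t * sgnF2 R t = 1.
Proof. by rewrite -sgnF2D addrr_pchar2 ?pchar_F2 // /sgnF2 eqxx. Qed.

Lemma dotDl (a b x : vec) : dot (a + b) x = dot a x + dot b x.
Proof. by rewrite /dot mulmxDl mxE. Qed.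

Lemma dotC (a x : vec) : dot a x = dot x a.
Proof. by rewrite /dot -[x in x *m _]trmxK -trmx_mul mxE. Qed.

Lemma dotDr (a x y : vec) : dot a (x + y) = dot a x + dot a y.
Proof. by rewrite dotC dotDl !(dotC _ a). Qed.

Lemma vec_addr_eq0 (x y : vec) : (x + y == 0) = (x == y).
Proof.
have opp_y : - y = y by apply/rowP => j; rewrite mxE oppr_pchar2 ?pchar_F2.
by rewrite -{1}opp_y subr_eq0.
Qed.

Lemma N_gt0 : 0 < N.
Proof. by rewrite exprn_gt0 ?ltr0n. Qed.

Lemma N_neq0 : N != 0.
Proof. by rewrite gt_eqF ?N_gt0. Qed.

Lemma sum_sgnF2_dot (z : vec) :
  \sum_(b : vec) sgnF2 R (dot b z) = if z == 0 then N else 0.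
Proof.
have [-> | z_neq0] := eqVneq z 0.
  under eq_bigr => b _ do rewrite /dot trmx0 mulmx0 mxE /sgnF2 eqxx.
  by rewrite sumr_const card_mx card_Fp // mul1n natrX.
have [i zi] : exists i, z 0 i = 1.
  have [i /eqP zi_neq0 | z_eq0] := pickP (fun i => z 0 i != 0).
    by exists i; case: (F2_cases (z 0 i)) zi_neq0.
  by case/eqP: z_neq0; apply/rowP => j; rewrite mxE; apply/eqP/negbFE/z_eq0.
set S := \sum_b _.
(* translating b by the i-th basis vector flips every sign *)
have S_opp : S = - S.
  rewrite {1}/S (reindex_inj (addIr (delta_mx 0 i))) -sumrN.
  apply: eq_bigr => b _; rewrite dotDl sgnF2D.
  by rewrite /dot -rowE !mxE zi /sgnF2 mulrN1.
have : S *+ 2 == 0 by rewrite mulr2n {2}S_opp subrr.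
by rewrite mulrn_eq0 => /eqP.
Qed.

Lemma sum_sgnF2_dot_mul (x y : vec) :
  \sum_(b : vec) sgnF2 R (dot b x) * sgnF2 R (dot b y) = if x == y then N else 0.
Proof.
under eq_bigr => b _ do rewrite -sgnF2D -dotDr.
by rewrite sum_sgnF2_dot vec_addr_eq0.
Qed.

Lemma eq_avg (g h : vec -> C) : g =1 h -> avg g = avg h.
Proof. by move=> gh; rewrite /avg (eq_bigr _ (fun x _ => gh x)). Qed.

Lemma avg_conj (g : vec -> C) : avg (fun x => (g x)^*) = (avg g)^*.
Proof. by rewrite /avg rmorphM fmorphV rmorphXn rmorph_nat rmorph_sum. Qed.

Lemma sum_avgE (g : vec -> C) : \sum_(x : vec) g x = N * avg g.
Proof. by rewrite /avg mulrA mulfV ?N_neq0 ?mul1r. Qed.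

Lemma avg_exchange (G : vec -> vec -> C) :
  avg (fun x => avg (fun y => G x y)) = avg (fun y => avg (fun x => G x y)).
Proof.
have scale_inner (F : vec -> vec -> C) :
    \sum_x N^-1 * \sum_y F x y = \sum_x \sum_y N^-1 * F x y.
  by apply: eq_bigr => x _; rewrite big_distrr.
by rewrite /avg !scale_inner exchange_big.
Qed.

Lemma sum_shift_mul (g h : vec -> C) :
  \sum_(a : vec) \sum_(x : vec) g (x + a) * h x = (\sum_x g x) * (\sum_x h x).
Proof.
rewrite exchange_big big_distrr /=; apply: eq_bigr => x _.
by rewrite -big_distrl /= [in RHS](reindex_inj (addrI x)).
Qed.

Lemma avg_shift_mul (g h : vec -> C) :
  avg (fun a => avg (fun x => g (x + a) * h x)) = avg g * avg h.
Proof. by rewrite /avg -big_distrr /= mulrA sum_shift_mul mulrACA. Qed.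

Lemma parseval (g h : vec -> C) :
  \sum_(b : vec) fourier g b * (fourier h b)^* = inner g h.
Proof.
have expand b : fourier g b * (fourier h b)^* = N^-1 * N^-1 *
    \sum_(x : vec) \sum_(y : vec)
      g x * (h y)^* * (sgnF2 R (dot b x) * sgnF2 R (dot b y)).
  rewrite /fourier -avg_conj /avg mulrACA big_distrl /=; congr (_ * _).
  apply: eq_bigr => x _; rewrite big_distrr /=; apply: eq_bigr => y _.
  by rewrite rmorphM rmorph_sgnF2 mulrACA.
rewrite (eq_bigr _ (fun b _ => expand b)) -big_distrr /= exchange_big /=.
under eq_bigr => x _.
  rewrite exchange_big /=.
  under eq_bigr => y _ do rewrite -big_distrr /= sum_sgnF2_dot_mul.
  rewrite (bigD1 x) //= eqxx big1 ?addr0 => [|y];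
    last by rewrite eq_sym => /negbTE ->; rewrite mulr0.
over.
by rewrite -big_distrl /= [_ * N]mulrC mulrA mulfVK ?N_neq0.
Qed.

Lemma fourier_shift (g : vec -> C) (b xi : vec) :
  fourier (fun x => g (x + b)) xi = sgnF2 R (dot xi b) * fourier g xi.
Proof.
rewrite /fourier /avg [in RHS](reindex_inj (addIr b)) /= mulrCA.
congr (_ * _); rewrite big_distrr /=; apply: eq_bigr => x _.
by rewrite dotDr sgnF2D mulrCA [X in _ = _ * X]mulrCA sgnF2_sqr mulr1.
Qed.

Lemma sum_fourier_Delta_mul (f g : vec -> C) :
  \sum_(a : vec) \sum_(b : vec) fourier (Delta a f) b * (fourier (Delta a g) b)^*
  = N * `|inner f g| ^+ 2.
Proof.
under eq_bigr => a _ do rewrite parseval.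
rewrite sum_avgE normCK; congr (_ * _).
rewrite (eq_avg (h := fun a => avg (fun x =>
           f (x + a) * (g (x + a))^* * ((f x)^* * g x)))); last first.
  by move=> a; apply: eq_avg => x; rewrite /Delta rmorphM /= conjCK mulrACA.
rewrite (avg_shift_mul (fun y => f y * (g y)^*) (fun y => (f y)^* * g y)).
rewrite /inner -avg_conj; congr (_ * _).
by apply: eq_avg => x; rewrite rmorphM /= conjCK mulrC.
Qed.

Lemma avg_Delta (g : vec -> C) (b : vec) :
  avg (Delta b g) = N * fourier (fun xi => `|fourier g xi| ^+ 2) b.
Proof.
rewrite -[avg _]/(inner (fun y => g (y + b)) g) -parseval [in RHS]/fourier -sum_avgE.
by apply: eq_bigr => xi _; rewrite fourier_shift -mulrA mulrC normCK dotC.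
Qed.

Lemma avg_Delta2 (g : vec -> C) :
  avg (fun x => avg (fun a => avg (fun b => Delta a (Delta b g) x)))
  = \sum_(xi : vec) `|fourier g xi| ^+ 4.
Proof.
set u := fun xi => `|fourier g xi| ^+ 2.
have avg_Delta_Delta b :
    avg (fun a => avg (Delta a (Delta b g))) = `|N * fourier u b| ^+ 2.
  have := avg_shift_mul (Delta b g) (fun x => (Delta b g x)^*).
  by rewrite avg_conj -normCK avg_Delta => <-.
have parseval_u :
    \sum_(b : vec) `|fourier u b| ^+ 2 = N^-1 * \sum_(xi : vec) `|fourier g xi| ^+ 4.
  under eq_bigr do rewrite normCK.
  rewrite parseval; congr (_ * _); apply: eq_bigr => xi _.
  by rewrite -normCK /u normrX normr_id -exprM.
rewrite avg_exchange (eq_avg (h := fun a => avg (fun b => avg (Delta a (Delta b g)))));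
  last by move=> a; exact: avg_exchange.
rewrite avg_exchange (eq_avg avg_Delta_Delta).
under eq_avg do rewrite normrM exprMn.
rewrite /avg -big_distrr /= parseval_u ger0_norm ?(ltW N_gt0) //.
by field; exact: N_neq0.
Qed.

Lemma avg_ge0 (g : vec -> C) : (forall x, 0 <= g x) -> 0 <= avg g.
Proof.
by move=> g_ge0; rewrite mulr_ge0 ?sumr_ge0 // invr_ge0 ltW ?N_gt0.
Qed.

Lemma avg_Delta3 (f : vec -> C) :
  avg (fun x => avg (fun a => avg (fun b => avg (fun c =>
    Delta a (Delta b (Delta c f)) x))))
  = avg (fun c => \sum_(xi : vec) `|fourier (Delta c f) xi| ^+ 4).
Proof.
rewrite (eq_avg (h := fun x => avg (fun a => avg (fun c => avg (fun b =>
           Delta a (Delta b (Delta c f)) x))))); last first.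
  by move=> x; apply: eq_avg => a; exact: avg_exchange.
rewrite (eq_avg (h := fun x => avg (fun c => avg (fun a => avg (fun b =>
           Delta a (Delta b (Delta c f)) x))))); last first.
  by move=> x; exact: avg_exchange.
by rewrite avg_exchange; apply: eq_avg => c; exact: avg_Delta2.
Qed.

Lemma U3norm_pow8 (f : vec -> C) :
  U3norm f ^+ 8 = avg (fun a => \sum_(xi : vec) `|fourier (Delta a f) xi| ^+ 4).
Proof. by rewrite rootCK // avg_Delta3. Qed.

Lemma U3norm_ge0 (f : vec -> C) : 0 <= U3norm f.
Proof.
rewrite rootC_ge0 // avg_Delta3 avg_ge0 // => a.
by rewrite sumr_ge0 // => xi _; rewrite exprn_ge0.
Qed.

Lemma norm2_sqr (f : vec -> C) : norm2 f ^+ 2 = inner f f.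
Proof. exact: sqrtCK. Qed.

Lemma norm2_gt0 (f : vec -> C) : (exists x, f x != 0) -> 0 < norm2 f.
Proof.
case=> x0 fx0_neq0; rewrite sqrtC_gt0 mulr_gt0 ?invr_gt0 ?N_gt0 //.
rewrite (bigD1 x0) //= -normCK ltr_pwDl ?exprn_gt0 ?normr_gt0 //.
by rewrite sumr_ge0 // => x _; rewrite -normCK exprn_ge0.
Qed.

Definition charmass (f : vec -> C) (L : {set vec * vec}) : C :=
  \sum_(ab in L) `|fourier (Delta ab.1 f) ab.2| ^+ 2.

Lemma charP_setE (f : vec -> C) (L : {set vec * vec}) :
  charP_set f L = charmass f L / (N * norm2 f ^+ 4).
Proof. by rewrite /charP_set /charP -big_distrl. Qed.

Section LagrangianOf.

Variables (phi : vec -> C) (L : {set vec * vec}).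
Hypothesis phi_norm : norm2 phi = 1.
Hypothesis phi_L : forall a b : vec, `|fourier (Delta a phi) b| = ((a, b) \in L)%:R.

Lemma card_lagrangian_of : #|L|%:R = N.
Proof.
have inner_phi : inner phi phi = 1 by rewrite -norm2_sqr phi_norm expr1n.
have := sum_fourier_Delta_mul phi phi.
rewrite inner_phi normr1 expr1n mulr1 pair_bigA /= => <-.
rewrite (eq_bigr (fun ab => if ab \in L then 1 else 0)) => [|[a b] _].
  by rewrite -big_mkcond sumr_const.
by rewrite -normCK phi_L; case: (_ \in L); rewrite ?expr1n ?expr0n.
Qed.

Lemma sum_abs_fourier_Delta_ge (f : vec -> C) :
  N * `|inner f phi| ^+ 2 <= \sum_(ab in L) `|fourier (Delta ab.1 f) ab.2|.
Proof.
rewrite -[leLHS]ger0_norm ?mulr_ge0 ?exprn_ge0 ?(ltW N_gt0) //.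
rewrite -sum_fourier_Delta_mul pair_bigA /=.
apply: le_trans (ler_norm_sum _ _ _) _.
rewrite [leRHS]big_mkcond /=; apply: ler_sum => -[a b] _ /=.
by rewrite normrM norm_conjC phi_L; case: (_ \in L); rewrite ?mulr1 ?mulr0.
Qed.

Lemma charmass_ge (f : vec -> C) : N * `|inner f phi| ^+ 4 <= charmass f L.
Proof.
set S := \sum_(ab in L) `|fourier (Delta ab.1 f) ab.2|.
have : (N * `|inner f phi| ^+ 2) ^+ 2 <= N * charmass f L.
  apply: (@le_trans _ _ (S ^+ 2)).
    by rewrite ler_pXn2r ?nnegrE ?sumr_ge0 ?mulr_ge0 ?exprn_ge0
         ?(ltW N_gt0) ?sum_abs_fourier_Delta_ge.
  by rewrite -card_lagrangian_of cauchy_schwarz_sum // => ab _; exact: ger0_real.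
by rewrite exprMn [N ^+ 2]expr2 -mulrA ler_pM2l ?N_gt0 // -exprM.
Qed.

Lemma charmass_le (f : vec -> C) : charmass f L <= N * U3norm f ^+ 4.
Proof.
have charmass_ge0 : 0 <= charmass f L.
  by rewrite sumr_ge0 // => ab _; rewrite exprn_ge0.
rewrite -(ler_pXn2r (isT : (0 < 2)%N)) ?nnegrE ?mulr_ge0 ?exprn_ge0 ?(ltW N_gt0)
  ?U3norm_ge0 //.
apply: (@le_trans _ _
  (#|L|%:R * \sum_(ab in L) (`|fourier (Delta ab.1 f) ab.2| ^+ 2) ^+ 2)).
  by apply: cauchy_schwarz_sum => ab _; rewrite ger0_real ?exprn_ge0.
rewrite card_lagrangian_of exprMn [N ^+ 2]expr2 -exprM U3norm_pow8 -mulrA.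
rewrite ler_pM2l ?N_gt0 // -sum_avgE pair_bigA /=.
by under eq_bigr do rewrite -exprM; apply: sum_in_le_sum => ab; rewrite exprn_ge0.
Qed.

End LagrangianOf.

End FourierF2.

Theorem lemma2p17 (R : realType) (n : nat) (phi : vec n -> R[i])
    (L : {set vec n * vec n}) :
  stabilizer_state phi -> is_lagrangian_of phi L ->
  forall f : vec n -> R[i], (exists x, f x != 0) ->
    (`|inner f phi| / norm2 f) ^+ 4 <= charP_set f L /\
    charP_set f L <= (U3norm f / norm2 f) ^+ 4.
Proof.
move=> [phi_norm _] [_ phi_L] f f_neq0.
have N_gt0 := N_gt0 R n.
have norm2f4_gt0 : 0 < norm2 f ^+ 4 by rewrite exprn_gt0 ?norm2_gt0.
rewrite charP_setE invfM mulrA !expr_div_n.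
split; rewrite ler_pM2r ?invr_gt0 //.
- by rewrite ler_pdivlMr // mulrC (charmass_ge phi_norm phi_L).
- by rewrite ler_pdivrMr // mulrC (charmass_le phi_norm phi_L).
Qed.
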